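(* Let $G=(V,E)$ be a finite graph and let $M_1,M_2$ be perfect matchings of its dart graph $\mathcal D(G)$. Then the set $(M_1\triangle M_2)\cap E^E_{\mathcal D}$, viewed as a subset of $E$, is a closed curve on $G$.
   Context: A closed curve on $G$ is a subset $C\subseteq E$ such that every vertex of $G$ is incident with an even number of edges of $C$. The dart graph $\mathcal D(G)$ has vertex set $V_{\mathcal D}(G)=\{(v,e)\in V\times E: v\text{ incident with }e\}$, two distinct darts $(v,e),(v',e')$ being adjacent iff $v=v'$ or $e=e'$. $E^E_{\mathcal D}$ is the set of edges of $\mathcal D(G)$ of the form $\{(x,e),(y,e)\}$; it is identified with $E$ via $e\leftrightarrow\{(x,e),(y,e)\}$. A perfect matching of a graph is a set of its edges such that each vertex is incident with exactly one of them. *)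

(* A finite simple graph G = (V,E): V a finType, E a set of
   2-element subsets of V; vertex v is incident with edge e iff v \in e. *)
From mathcomp Require Import all_boot.
Set Implicit Arguments. Unset Strict Implicit. Unset Printing Implicit Defensive.

Section DartGraph.
Variables (V : finType) (E : {set {set V}}).

Definition simple_graph : Prop := forall e, e \in E -> #|e| = 2.

Definition dart := {p : V * {set V} | (p.2 \in E) && (p.1 \in p.2)}.

Definition dvert (d : dart) : V := (val d).1.
Definition dedge (d : dart) : {set V} := (val d).2.

Definition dart_adj (d d' : dart) : bool :=
  (d != d') && ((dvert d == dvert d') || (dedge d == dedge d')).

Definition dart_edge (f : {set dart}) : bool :=
  [exists d, exists d', dart_adj d d' && (f == [set d; d'])].

Definition dart_perfect_matching (M : {set {set dart}}) : Prop :=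
  (forall f, f \in M -> dart_edge f) /\
  (forall d : dart, #|[set f in M | d \in f]| = 1).

(* the edge {(x,e),(y,e)} of E^E_D corresponding to e *)
Definition EE_edge (e : {set V}) : {set dart} := [set d | dedge d == e].

Definition symdiff_EE (M1 M2 : {set {set dart}}) : {set {set V}} :=
  [set e in E | EE_edge e \in (M1 :\: M2) :|: (M2 :\: M1)].

Definition closed_curve (C : {set {set V}}) : Prop :=
  C \subset E /\ forall v : V, ~~ odd #|[set e in C | v \in e]|.

End DartGraph.

(* The darts at a vertex v are partitioned by any perfect matching M of the
   dart graph.  An edge of M joining two darts at a common vertex contains zero
   or two darts at v, whereas the edge {(x,e),(y,e)} contains exactly one of
   them when v is in e and none otherwise.  So the number of edges e at v whose
   dart-graph edge lies in M has the parity of the degree of v, whatever M is,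
   and for two perfect matchings these edge sets at v differ in an even number
   of edges. *)

From mathcomp Require Import all_boot.
Set Implicit Arguments. Unset Strict Implicit. Unset Printing Implicit Defensive.

Lemma card_set2I (T : finType) (a b : T) (A : {set T}) : a != b ->
  #|[set a; b] :&: A| = (a \in A) + (b \in A).
Proof.
move=> neq_ab.
have -> : #|[set a; b] :&: A| = \sum_(x in [set a; b]) (x \in A).
  by rewrite -big_mkcondr sum1dep_card; apply: eq_card => x; rewrite !inE.
by rewrite big_setU1 ?big_set1 // inE.
Qed.

Lemma odd_sum (I : finType) (A : {pred I}) (F : I -> nat) :
  odd (\sum_(i in A) F i) = odd #|[set i in A | odd (F i)]|.
Proof.
rewrite -(odd_mod _ (erefl false : odd 2 = false)) -modn_summ odd_mod //.
under eq_bigr do rewrite modn2.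
by rewrite -big_mkcondr sum1dep_card.
Qed.

Lemma card_sum_blocks (T : finType) (P : {set {set T}}) (D : {set T}) :
  (forall x, #|[set B in P | x \in B]| = 1) -> #|D| = \sum_(B in P) #|B :&: D|.
Proof.
move=> P1; rewrite -sum1_card.
under eq_bigr => x _ do rewrite -(P1 x) -sum1dep_card big_mkcondr.
rewrite exchange_big /=; apply: eq_bigr => B _.
by rewrite -big_mkcondr sum1dep_card; apply: eq_card => x; rewrite !inE andbC.
Qed.

Lemma odd_card_symdiff (T : finType) (A B : {set T}) :
  odd #|(A :\: B) :|: (B :\: A)| = odd #|A| (+) odd #|B|.
Proof.
have disjointAB : (A :\: B) :&: (B :\: A) = set0.
  by apply/setP => x; rewrite !inE; case: (x \in A); case: (x \in B).
rewrite cardsU disjointAB cards0 subn0 -[#|A|](cardsID B) -[#|B|](cardsID A).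
by rewrite setIC !oddD; case: (odd _); case: (odd _); case: (odd _).
Qed.

Section Darts.

Variables (V : finType) (E : {set {set V}}).
Hypothesis simpleE : simple_graph E.

Definition darts_at (v : V) : {set dart E} := [set d | dvert d == v].

Definition matched_edges_at (M : {set {set dart E}}) (v : V) : {set {set V}} :=
  [set e in E | (v \in e) && (EE_edge E e \in M)].

Lemma dedge_in (d : dart E) : dedge d \in E.
Proof. by case/andP: (valP d). Qed.

Lemma dvert_in_dedge (d : dart E) : dvert d \in dedge d.
Proof. by case/andP: (valP d). Qed.

Lemma dart_eq (d d' : dart E) : dvert d = dvert d' -> dedge d = dedge d' -> d = d'.
Proof.
move=> eq_v eq_e; apply: val_inj.
by rewrite [val d]surjective_pairing [val d']surjective_pairing; congr pair.
Qed.

Lemma EE_edge_inj : {in E &, injective (EE_edge E)}.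
Proof.
move=> e e' eE _ eq_ee'.
have [x xe] : exists x, x \in e by apply/card_gt0P; rewrite simpleE.
have dxE : (e \in E) && (x \in e) by rewrite eE xe.
have : (Sub (x, e) dxE : dart E) \in EE_edge E e by rewrite inE.
by rewrite eq_ee' inE => /eqP.
Qed.

Lemma dedge_pair (d d' : dart E) : dedge d = dedge d' -> dvert d != dvert d' ->
  dedge d = [set dvert d; dvert d'].
Proof.
move=> eq_e neq_v; apply/esym/eqP.
rewrite eqEcard cards2 neq_v (simpleE (dedge_in d)) andbT.
by apply/subsetP => x /set2P[] ->; [|rewrite eq_e]; exact: dvert_in_dedge.
Qed.

Lemma EE_edge_pair (d d' : dart E) : dedge d = dedge d' -> dvert d != dvert d' ->
  EE_edge E (dedge d) = [set d; d'].
Proof.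
move=> eq_e neq_v; apply/setP => x; rewrite inE; apply/eqP/set2P => [ex | [] ->] //.
have := dvert_in_dedge x; rewrite ex (dedge_pair eq_e neq_v) => /set2P[] ?.
  by left; apply: dart_eq.
by right; apply: dart_eq; rewrite ?ex.
Qed.

Lemma odd_card_dart_edge_at (f : {set dart E}) (v : V) : dart_edge f ->
  odd #|f :&: darts_at v| = (f \in EE_edge E @: [set e in E | v \in e]).
Proof.
case/existsP=> d /existsP[d' /andP[/andP[neq_dd' adj] /eqP->]].
rewrite card_set2I // !inE.
case/orP: adj => [/eqP eq_v | /eqP eq_e].
  rewrite eq_v addnn odd_double; apply/esym/imsetP => -[e _ eq_f].
  move: (set21 d d') (set22 d d'); rewrite eq_f !inE => /eqP ed /eqP ed'.
  by rewrite (dart_eq eq_v (etrans ed (esym ed'))) eqxx in neq_dd'.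
have neq_v : dvert d != dvert d'.
  by apply: contraNneq neq_dd' => eq_v; rewrite (dart_eq eq_v eq_e).
rewrite -(EE_edge_pair eq_e neq_v).
have -> : (EE_edge E (dedge d) \in EE_edge E @: [set e in E | v \in e]) = (v \in dedge d).
  apply/imsetP/idP => [[e /setIdP[eE ve] eq_de]|vd].
    by rewrite (EE_edge_inj (dedge_in d) eE eq_de).
  by exists (dedge d); rewrite // inE dedge_in.
rewrite (dedge_pair eq_e neq_v) !inE.
have [eq_dv|_] := eqVneq (dvert d) v; have [eq_d'v|_] := eqVneq (dvert d') v => //.
by rewrite eq_dv eq_d'v eqxx in neq_v.
Qed.

Lemma odd_card_darts_at (M : {set {set dart E}}) (v : V) :
  dart_perfect_matching M -> odd #|darts_at v| = odd #|matched_edges_at M v|.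
Proof.
case=> M_edges M_cover.
rewrite (card_sum_blocks (darts_at v) M_cover) odd_sum.
have -> : [set f in M | odd #|f :&: darts_at v|] = EE_edge E @: matched_edges_at M v.
  apply/setP => f; rewrite inE; apply/andP/imsetP => [[fM]|[e]].
    rewrite odd_card_dart_edge_at ?M_edges // => /imsetP[e /setIdP[eE ve] eq_f].
    by exists e; rewrite // inE eE ve -eq_f fM.
  rewrite inE => /and3P[eE ve eM] ->; split => //.
  by rewrite odd_card_dart_edge_at ?M_edges //; apply: imset_f; rewrite inE eE.
by rewrite card_in_imset // => e e' /setIdP[eE _] /setIdP[e'E _]; apply: EE_edge_inj.
Qed.

End Darts.

Theorem proposition2p5 (V : finType) (E : {set {set V}})
  (hG : simple_graph E) (M1 M2 : {set {set dart E}})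
  (hM1 : dart_perfect_matching M1) (hM2 : dart_perfect_matching M2) :
  closed_curve E (symdiff_EE M1 M2).
Proof.
split=> [|v]; first by apply/subsetP => e /setIdP[].
have -> : [set e in symdiff_EE M1 M2 | v \in e] =
    (matched_edges_at M1 v :\: matched_edges_at M2 v) :|:
    (matched_edges_at M2 v :\: matched_edges_at M1 v).
  by apply/setP => e; rewrite !inE; case: (e \in E); case: (v \in e);
    case: (EE_edge E e \in M1); case: (EE_edge E e \in M2).
by rewrite odd_card_symdiff -!odd_card_darts_at // addbb.
Qed.
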